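(* Let $d\ge2$ and $m\in\mathbb R$, and set $\theta=\frac m4(d-1)$. For every smooth $f$ on $\mathbb R_+^d$ and every $x=(x_1,\dots,x_{d-1})$ with $x_i\ge0$, $\sum_{j=1}^{d-1}x_j\le1$, setting $x_d=1-\sum_{j=1}^{d-1}x_j$ and $g(x_1,\dots,x_{d-1})=f(x_1,\dots,x_{d-1},1-\sum_{j=1}^{d-1}x_j)$, one has $\mathscr L_d^{BEP(m)}f(x_1,\dots,x_{d-1},x_d)=\mathscr L^{WF}_{d,\theta}g(x_1,\dots,x_{d-1})$. That is, the Brownian Energy process with parameter $m$ on the complete graph with $d$ vertices started with $\sum_{i=1}^dx_i=1$ coincides with the $d$-types Wright–Fisher diffusion with symmetric parent-independent mutation at rate $\theta=\frac m4(d-1)$.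
   Context: The Brownian Energy process BEP($m$) on the complete graph with $d$ vertices is the diffusion on $\mathbb R_+^d$ with generator $\mathscr L_d^{BEP(m)}f(y)=\frac12\sum_{1\le i<j\le d}y_iy_j(\partial_{y_i}-\partial_{y_j})^2f(y)-\frac m4\sum_{1\le i<j\le d}(y_i-y_j)(\partial_{y_i}-\partial_{y_j})f(y)$. The $d$-types Wright–Fisher model with symmetric parent-independent mutation at rate $\theta$ is the diffusion on the simplex $\{x\in\mathbb R^{d-1}: x_i\ge0,\ \sum_i x_i\le1\}$ with generator $\mathscr L^{WF}_{d,\theta}g(x)=\sum_{i=1}^{d-1}\frac12x_i(1-x_i)\partial^2_{x_i}g(x)-\sum_{1\le i<j\le d-1}x_ix_j\partial_{x_i}\partial_{x_j}g(x)+\frac{\theta}{d-1}\sum_{i=1}^{d-1}(1-dx_i)\partial_{x_i}g(x)$. *)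

From HB Require Import structures.
From mathcomp Require Import all_boot all_order all_algebra.
From mathcomp Require Import all_classical all_reals all_analysis.
Set Implicit Arguments. Unset Strict Implicit. Unset Printing Implicit Defensive.
Import Order.TTheory GRing.Theory Num.Theory.
Import numFieldNormedType.Exports.
Local Open Scope ring_scope.

Section Defs.
Variable R : realType.

Definition ebasis (n : nat) (i : 'I_n) : 'rV[R]_n := delta_mx 0 i.

Definition pd (n : nat) (i : 'I_n) (f : 'rV[R]_n -> R) : 'rV[R]_n -> R :=
  fun y => derive f y (ebasis i).

Fixpoint Ck (n : nat) (k : nat) (f : 'rV[R]_n -> R) : Prop :=
  match k with
  | 0 => continuous f
  | k'.+1 => (forall y, differentiable f y) /\ (forall i : 'I_n, Ck k' (pd i f))
  end.

Definition smooth (n : nat) (f : 'rV[R]_n -> R) : Prop := forall k, Ck k f.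

Definition pdiff (n : nat) (i j : 'I_n) (f : 'rV[R]_n -> R) : 'rV[R]_n -> R :=
  fun y => pd i f y - pd j f y.

Definition L_BEP (d : nat) (m : R) (f : 'rV[R]_d -> R) (y : 'rV[R]_d) : R :=
  2^-1 * (\sum_(i < d) \sum_(j < d | (i < j)%N)
            y 0 i * y 0 j * pdiff i j (pdiff i j f) y)
  - m / 4 * (\sum_(i < d) \sum_(j < d | (i < j)%N)
            (y 0 i - y 0 j) * pdiff i j f y).

Definition L_WF (d : nat) (theta : R) (g : 'rV[R]_(d.-1) -> R)
    (x : 'rV[R]_(d.-1)) : R :=
  \sum_(i < d.-1) 2^-1 * x 0 i * (1 - x 0 i) * pd i (pd i g) x
  - \sum_(i < d.-1) \sum_(j < d.-1 | (i < j)%N) x 0 i * x 0 j * pd i (pd j g) x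
  + theta / (d.-1)%:R * \sum_(i < d.-1) (1 - d%:R * x 0 i) * pd i g x.

(* (x_1,...,x_{d-1}) |-> (x_1,...,x_{d-1}, 1 - sum_j x_j) *)
Definition simplex_lift (d : nat) (x : 'rV[R]_(d.-1)) : 'rV[R]_d :=
  \row_(i < d) oapp (fun j : 'I_(d.-1) => x 0 j) (1 - \sum_(j < d.-1) x 0 j)
                    (insub (val i)).

End Defs.

From HB Require Import structures.
From mathcomp Require Import all_boot all_order all_algebra.
From mathcomp Require Import all_classical all_reals all_analysis.
From mathcomp Require Import ring lra.
Import Order.TTheory GRing.Theory Num.Theory.
Import numFieldNormedType.Exports.
Local Open Scope ring_scope.

(* The lift [x |-> (x, 1 - sum_j x_j)] is affine with directions [e_i - e_d], so the
   partial derivatives of [g = f \o lift] are [d_i g = (d_i - d_d) f] and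
   [d_i d_j g = (d_i - d_d) (d_j - d_d) f], taken at [y = lift x], where [sum_a y_a = 1].
   Sums over [i < d-1] of such terms extend to sums over all [d] indices, since the
   summands vanish at the index [d].  Using [sum_a y_a = 1] and the symmetry of the
   Hessian of [f] (Schwarz), the diffusion parts of both generators become
   [1/2 (sum_a y_a f_aa - sum_(a,b) y_a y_b f_ab)] and the drift parts become
   [m/4 (sum_a f_a - d sum_a y_a f_a)]. *)

Section DirectionalDerivatives.
Context {R : realType} {U V W : normedModType R}.

Lemma derive_comp_line (F : V -> W) (psi : U -> V) z v w :
  (forall h : R, psi (h *: v + z) = h *: w + psi z) ->
  derive (F \o psi) z v = derive F (psi z) w.
Proof. by move=> psi_line; rewrite /derive; under eq_fun do rewrite /= psi_line. Qed.

Lemma derivable_comp_line (F : V -> W) (psi : U -> V) z v w :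
  (forall h : R, psi (h *: v + z) = h *: w + psi z) ->
  derivable (F \o psi) z v = derivable F (psi z) w.
Proof. by move=> psi_line; rewrite /derivable; under eq_fun do rewrite /= psi_line. Qed.

End DirectionalDerivatives.

Arguments derive_comp_line {R U V W} F psi {z v w}.
Arguments derivable_comp_line {R U V W} F psi {z v w}.

Section Schwarz.
Context {R : realType} {U : normedModType R}.
Implicit Types (F G : U -> R) (y p a b v : U).

Lemma MVT_line G p v t : 0 < t -> (forall y, differentiable G y) ->
  exists2 s, 0 < s < t & G (p + t *: v) - G p = t * derive G (p + s *: v) v.
Proof.
move=> t_gt0 dG; pose line s : U := p + s *: v.
have line_shift s h : line (h *: 1 + s) = h *: v + line s.
  by rewrite /line -[h *: 1]/(h * 1) mulr1 scalerDl addrCA.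
have Gline_derive (s : R) : is_derive s 1 (G \o line) (derive G (line s) v).
  rewrite -(derive_comp_line G _ (line_shift s)).
  by apply/derivableP; rewrite (derivable_comp_line G _ (line_shift s)); exact: diff_derivable.
have Gline_cont : {within `[0, t], continuous (G \o line)}%classic.
  apply: continuous_subspaceT => s; apply/differentiable_continuous/derivable1_diffP.
  by case: (Gline_derive s).
have [s s_in EG] := MVT t_gt0 (fun s _ => Gline_derive s) Gline_cont.
exists s; first by move: s_in; rewrite in_itv.
by move: EG; rewrite /= /line scale0r addr0 subr0 mulrC.
Qed.

Definition second_diff F y a b t :=
  F (y + t *: a + t *: b) - F (y + t *: a) - F (y + t *: b) + F y.

Lemma second_diffC F y a b t : second_diff F y a b t = second_diff F y b a t.
Proof. by rewrite /second_diff [y + t *: a + _]addrAC; ring. Qed.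

Lemma second_diff_MVT F y a b t : 0 < t ->
  (forall z, differentiable F z) ->
  (forall z, differentiable (fun z => derive F z a) z) ->
  exists s r, [/\ 0 < s < t, 0 < r < t &
    second_diff F y a b t = t ^+ 2 * derive (fun z => derive F z a) (y + s *: a + r *: b) b].
Proof.
move=> t_gt0 dF dFa.
have dshift c z : differentiable (fun z => F (z + c)) z.
  exact: (@differentiable_comp _ _ _ _ (fun z => z + c) F).
pose G z := F (z + t *: b) - F z.
have [s s_in ->] : exists2 s, 0 < s < t &
    second_diff F y a b t = t * derive G (y + s *: a) a.
  have [s s_in EG] := @MVT_line G y a t t_gt0 (fun z => differentiableB (dshift _ z) (dF z)).
  by exists s; rewrite // -EG /G /second_diff; ring.
have dG z : derive G z a = derive F (z + t *: b) a - derive F z a.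
  rewrite deriveB; [| exact: diff_derivable (dshift _ _) | exact: diff_derivable (dF _)].
  by congr (_ - _); apply: (derive_comp_line F (fun z => z + t *: b)) => h; rewrite addrA.
have [r r_in Er] := @MVT_line _ (y + s *: a) b t t_gt0 dFa.
by exists s, r; split; rewrite // dG Er mulrA -expr2.
Qed.

Lemma continuous_eq_meet {C1 C2 : U -> R} {y : U} :
  continuous C1 -> continuous C2 ->
  (forall e, 0 < e -> exists p q, [/\ `|y - p| < e, `|y - q| < e & C1 p = C2 q]) ->
  C1 y = C2 y.
Proof.
move=> cC1 cC2 meet; apply/eqP; rewrite -subr_eq0 -normr_le0.
apply/ler_addgt0Pr => e e_gt0; rewrite add0r.
have close (C : U -> R) : continuous C ->
    exists2 d, 0 < d & forall z, `|y - z| < d -> `|C y - C z| < e / 2.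
  move=> cC; have /cvgrPdist_lt/(_ (e / 2)) := cC y.
  by case/(_ _)/nbhs_normP => [|d d_gt0 Hd]; [rewrite divr_gt0 | exists d].
have [d1 d1_gt0 near1] := close _ cC1; have [d2 d2_gt0 near2] := close _ cC2.
have d_gt0 : 0 < Num.min d1 d2 by rewrite lt_min d1_gt0.
have [p [q [yp yq Epq]]] := meet _ d_gt0.
have /near1 : `|y - p| < d1 by rewrite (lt_le_trans yp) // ge_min lexx.
have /near2 : `|y - q| < d2 by rewrite (lt_le_trans yq) // ge_min lexx orbT.
have -> : C1 y - C2 y = (C1 y - C1 p) - (C2 y - C2 q) by rewrite Epq; ring.
move: (ler_normB (C1 y - C1 p) (C2 y - C2 q)); lra.
Qed.

Lemma derive_comm F y a b :
  (forall z, differentiable F z) ->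
  (forall z, differentiable (fun z => derive F z a) z) ->
  (forall z, differentiable (fun z => derive F z b) z) ->
  continuous (fun z => derive (fun w => derive F w a) z b) ->
  continuous (fun z => derive (fun w => derive F w b) z a) ->
  derive (fun w => derive F w a) y b = derive (fun w => derive F w b) y a.
Proof.
move=> dF dFa dFb cFab cFba; apply: (continuous_eq_meet cFab cFba) => e e_gt0.
pose t := e / (`|a| + `|b| + 1).
have t_gt0 : 0 < t by rewrite divr_gt0 // ltr_wpDl // addr_ge0.
have close s r : 0 < s < t -> 0 < r < t -> `|y - (y + s *: a + r *: b)| < e.
  case/andP=> s_gt0 st /andP[r_gt0 rt].
  rewrite -addrA opprD addrA subrr add0r normrN (le_lt_trans (ler_normD _ _)) //.
  rewrite !normrZ !gtr0_norm //.
  have -> : e = t * (`|a| + `|b| + 1) by rewrite divfK // gt_eqF // ltr_wpDl // addr_ge0.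
  by move: (normr_ge0 a) (normr_ge0 b); nra.
have [s [r [s_in r_in Eab]]] := second_diff_MVT _ y a b _ t_gt0 dF dFa.
have [s' [r' [s'_in r'_in Eba]]] := second_diff_MVT _ y b a _ t_gt0 dF dFb.
exists (y + s *: a + r *: b), (y + r' *: a + s' *: b); split; rewrite ?close //.
apply: (@mulfI _ (t ^+ 2)); first by rewrite expf_neq0 // gt_eqF.
by rewrite -Eab [y + r' *: a + _]addrAC -Eba second_diffC.
Qed.

End Schwarz.

Section Sums.
Context {R : numFieldType}.

Lemma sum_lt_sym n (G : 'I_n -> 'I_n -> R) : (forall i j, G i j = G j i) ->
  \sum_(i < n) \sum_(j < n | (i < j)%N) G i j =
  2^-1 * (\sum_(i < n) \sum_(j < n) G i j - \sum_(i < n) G i i).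
Proof.
move=> Gsym.
have split_ij i j : G i j =
    (if (i < j)%N then G i j else 0) + (if (j < i)%N then G j i else 0)
    + (if j == i then G i i else 0).
  have [->|ne] := eqVneq j i; first by rewrite ltnn !add0r.
  rewrite addr0; case: ltngtP => [_|_|/val_inj ij]; rewrite ?addr0 ?add0r //.
  by rewrite ij eqxx in ne.
have -> : \sum_(i < n) \sum_(j < n) G i j =
    2 * \sum_(i < n) \sum_(j < n | (i < j)%N) G i j + \sum_(i < n) G i i.
  under eq_bigr => i _ do under eq_bigr => j _ do rewrite split_ij.
  under eq_bigr => i _ do rewrite !big_split /=.
  rewrite !big_split /= [X in _ + X + _]exchange_big /= mulr2n mulrDl mul1r.
  congr (_ + _ + _); apply: eq_bigr => i _.
  - by rewrite [RHS]big_mkcond.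
  - by rewrite [RHS]big_mkcond.
  - by rewrite -big_mkcond big_pred1_eq.
by field.
Qed.

Section BrownianEnergy.
Context {n : nat} {y : 'I_n -> R}.
Hypothesis y_sum1 : \sum_(a < n) y a = 1.

Lemma sum_mul_weights (h : 'I_n -> R) : \sum_(a < n) \sum_(b < n) h a * y b = \sum_(a < n) h a.
Proof. by apply: eq_bigr => a _; rewrite -mulr_sumr y_sum1 mulr1. Qed.

Lemma bep_diffusion_sum (S : 'I_n -> 'I_n -> R) : (forall a b, S a b = S b a) ->
  \sum_(a < n) \sum_(b < n | (a < b)%N) y a * y b * ((S a a - S a b) - (S b a - S b b)) =
  \sum_(a < n) y a * S a a - \sum_(a < n) \sum_(b < n) y a * y b * S a b.
Proof.
move=> Ssym; rewrite sum_lt_sym => [|a b]; last by rewrite (Ssym a b); ring.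
rewrite [X in _ - X]big1 => [|a _]; last by rewrite !subrr mulr0.
have expand a b : y a * y b * ((S a a - S a b) - (S b a - S b b)) =
    y a * S a a * y b + y b * S b b * y a - 2 * (y a * y b * S a b).
  by rewrite (Ssym b a); ring.
under eq_bigr => a _ do under eq_bigr => b _ do rewrite expand.
under eq_bigr => a _ do rewrite sumrB big_split /=.
rewrite subr0 sumrB big_split /= [X in _ + X - _]exchange_big /= !sum_mul_weights.
under [X in _ - X]eq_bigr => a _ do rewrite -mulr_sumr.
by rewrite -mulr_sumr; field.
Qed.

Lemma bep_drift_sum (F : 'I_n -> R) :
  \sum_(a < n) \sum_(b < n | (a < b)%N) (y a - y b) * (F a - F b) =
  n%:R * \sum_(a < n) y a * F a - \sum_(a < n) F a.
Proof.
rewrite sum_lt_sym => [|a b]; last by ring.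
rewrite [X in _ - X]big1 => [|a _]; last by rewrite subrr mul0r.
have expand a b : (y a - y b) * (F a - F b) =
    y a * F a + y b * F b - (F a * y b + F b * y a) by ring.
under eq_bigr => a _ do under eq_bigr => b _ do rewrite expand.
under eq_bigr => a _ do rewrite sumrB !big_split /= sumr_const card_ord.
rewrite subr0 sumrB !big_split /=.
rewrite [X in _ + X - _]exchange_big [X in _ - (_ + X)]exchange_big /=.
under [X in _ + X - _]eq_bigr => a _ do rewrite sumr_const card_ord.
by rewrite !sum_mul_weights !sumrMnl -mulr_natl; field.
Qed.

End BrownianEnergy.

Lemma sum_widen_ord n (h : 'I_n.+1 -> R) :
  h ord_max = 0 -> \sum_(i < n) h (widen_ord (leqnSn n) i) = \sum_(a < n.+1) h a.
Proof. by move=> h0; rewrite big_ord_recr /= h0 addr0. Qed.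

Lemma sum2_widen_ord n (h : 'I_n.+1 -> 'I_n.+1 -> R) :
  (forall a, h a ord_max = 0) -> (forall b, h ord_max b = 0) ->
  \sum_(i < n) \sum_(j < n) h (widen_ord (leqnSn n) i) (widen_ord (leqnSn n) j) =
  \sum_(a < n.+1) \sum_(b < n.+1) h a b.
Proof.
move=> h_a0 h_0b.
under eq_bigr => i _ do rewrite (@sum_widen_ord n (h (widen_ord (leqnSn n) i))) //.
by rewrite (@sum_widen_ord n (fun a => \sum_(b < n.+1) h a b)) // big1.
Qed.

Definition diff_last {n} (F : 'I_n.+1 -> R) a := F a - F ord_max.

Section WrightFisher.
Context {n : nat} {y : 'I_n.+1 -> R}.
Hypothesis y_sum1 : \sum_(a < n.+1) y a = 1.
Local Notation w := (widen_ord (leqnSn n)).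

Lemma wf_diffusion_sum (S : 'I_n.+1 -> 'I_n.+1 -> R) : (forall a b, S a b = S b a) ->
  \sum_(i < n) 2^-1 * y (w i) * (1 - y (w i)) *
    diff_last (fun a => diff_last (S a) (w i)) (w i)
  - \sum_(i < n) \sum_(j < n | (i < j)%N) y (w i) * y (w j) *
    diff_last (fun a => diff_last (S a) (w j)) (w i)
  = 2^-1 * (\sum_(a < n.+1) y a * S a a - \sum_(a < n.+1) \sum_(b < n.+1) y a * y b * S a b).
Proof.
move=> Ssym; set T := fun i j => diff_last (fun a => diff_last (S a) (w j)) (w i).
rewrite sum_lt_sym => [|i j]; last first.
  by rewrite /T /diff_last (Ssym (w j) (w i)) (Ssym (w j) ord_max) (Ssym ord_max (w i)); ring.
have -> : \sum_(i < n) 2^-1 * y (w i) * (1 - y (w i)) * T i i =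
    2^-1 * (\sum_(i < n) y (w i) * T i i - \sum_(i < n) y (w i) * y (w i) * T i i).
  by rewrite -sumrB mulr_sumr; apply: eq_bigr => i _; ring.
have -> : \sum_(i < n) y (w i) * T i i =
    \sum_(a < n.+1) y a * S a a - \sum_(a < n.+1) y a * S a ord_max
    - \sum_(a < n.+1) y a * S ord_max a + S ord_max ord_max.
  rewrite (@sum_widen_ord n (fun a => y a * diff_last (fun c => diff_last (S c) a) a));
    last first.
    by rewrite /diff_last !subrr mulr0.
  rewrite -!sumrB -[S ord_max ord_max]mul1r -y_sum1 mulr_suml -big_split /=.
  by apply: eq_bigr => a _; rewrite /diff_last; ring.
have -> : \sum_(i < n) \sum_(j < n) y (w i) * y (w j) * T i j =
    \sum_(a < n.+1) \sum_(b < n.+1) y a * y b * S a b - \sum_(a < n.+1) y a * S a ord_max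
    - \sum_(a < n.+1) y a * S ord_max a + S ord_max ord_max.
  rewrite (@sum2_widen_ord n (fun a b => y a * y b * diff_last (fun c => diff_last (S c) b) a));
    [| by move=> a; rewrite /diff_last !subrr mulr0
     | by move=> b; rewrite /diff_last subrr mulr0].
  have expand a b : y a * y b * diff_last (fun c => diff_last (S c) b) a =
      y a * y b * S a b - y a * S a ord_max * y b - y b * S ord_max b * y a
      + y a * S ord_max ord_max * y b.
    by rewrite /diff_last; ring.
  under eq_bigr => a _ do under eq_bigr => b _ do rewrite expand.
  under eq_bigr => a _ do rewrite big_split sumrB sumrB /=.
  rewrite big_split sumrB sumrB /= [X in _ - X + _]exchange_big /= !(sum_mul_weights y_sum1).
  by rewrite -mulr_suml y_sum1 mul1r.
by field.
Qed.

Lemma wf_drift_sum (F : 'I_n.+1 -> R) :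
  \sum_(i < n) (1 - n.+1%:R * y (w i)) * diff_last F (w i) =
  \sum_(a < n.+1) F a - n.+1%:R * \sum_(a < n.+1) y a * F a.
Proof.
rewrite (@sum_widen_ord n (fun a => (1 - n.+1%:R * y a) * diff_last F a)); last first.
  by rewrite /diff_last subrr mulr0.
have expand a : (1 - n.+1%:R * y a) * diff_last F a =
    F a - n.+1%:R * (y a * F a) - F ord_max + n.+1%:R * F ord_max * y a.
  by rewrite /diff_last; ring.
under eq_bigr do rewrite expand.
rewrite big_split !sumrB /= -!mulr_sumr y_sum1 sumr_const card_ord -mulr_natl.
ring.
Qed.

End WrightFisher.
End Sums.

Section PartialDerivatives.
Context {R : realType} {n : nat}.
Implicit Types (f A B : 'rV[R]_n -> R) (y : 'rV[R]_n).

Lemma pdB A B i y : differentiable A y -> differentiable B y ->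
  pd i (fun y => A y - B y) y = pd i A y - pd i B y.
Proof. by move=> dA dB; apply: deriveB; exact: diff_derivable. Qed.

Lemma pd_comm f i j y : Ck 2 f -> pd i (pd j f) y = pd j (pd i f) y.
Proof.
move=> [df C1f]; have [dfi _] := C1f i; have [dfj _] := C1f j.
by apply: derive_comm => //; [case: (C1f j) => _ /(_ i) | case: (C1f i) => _ /(_ j)].
Qed.

End PartialDerivatives.

Section SimplexLift.
Context {R : realType} {n : nat}.
Local Notation slift := (@simplex_lift R n.+1).
Local Notation w := (widen_ord (leqnSn n)).

Lemma simplex_lift_widen (x : 'rV[R]_n) i : slift x 0 (w i) = x 0 i.
Proof.
rewrite mxE; case: insubP => [j _ vj|] /=; last by rewrite ltn_ord.
by congr (x 0 _); apply/val_inj; rewrite vj.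
Qed.

Lemma simplex_lift_max (x : 'rV[R]_n) : slift x 0 ord_max = 1 - \sum_(j < n) x 0 j.
Proof.
by rewrite mxE; case: insubP => [j _ /= vj|] //; move: (ltn_ord j); rewrite vj ltnn.
Qed.

Lemma sum_simplex_lift (x : 'rV[R]_n) : \sum_(a < n.+1) slift x 0 a = 1.
Proof.
rewrite big_ord_recr /= simplex_lift_max.
by under eq_bigr do rewrite simplex_lift_widen; rewrite addrC subrK.
Qed.

Lemma simplex_lift_shift (z : 'rV[R]_n) i (h : R) :
  slift (h *: ebasis R i + z) = h *: (ebasis R (w i) - ebasis R ord_max) + slift z.
Proof.
apply/rowP => a; rewrite [RHS]mxE.
have [a_lt|a_ge] := ltnP a n.
  have -> : a = w (Ordinal a_lt) by apply/val_inj.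
  by rewrite !simplex_lift_widen !mxE !eqE /= (ltn_eqF a_lt) subr0.
have -> : a = ord_max by apply/val_inj/anti_leq; rewrite -ltnS ltn_ord.
rewrite !simplex_lift_max !mxE !eqE /= (gtn_eqF (ltn_ord i)) eqxx.
under eq_bigr do rewrite !mxE.
rewrite big_split /= -mulr_sumr (bigD1 i) //= eqxx big1 ?addr0 => [|j /negbTE ->//].
by rewrite mulr1; ring.
Qed.

Lemma pd_comp_simplex_lift (H : 'rV[R]_n.+1 -> R) i z :
  (forall y, differentiable H y) ->
  pd i (fun z => H (slift z)) z = diff_last (fun a => pd a H (slift z)) (w i).
Proof.
move=> dH; rewrite /pd /diff_last.
rewrite (derive_comp_line H slift (w := ebasis R (w i) - ebasis R ord_max)) => [|h].
  by rewrite !deriveE // linearB.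
exact: simplex_lift_shift.
Qed.

Lemma pd_pd_comp_simplex_lift (H : 'rV[R]_n.+1 -> R) i j z :
  (forall y, differentiable H y) -> (forall a y, differentiable (pd a H) y) ->
  pd i (pd j (fun z => H (slift z))) z =
  diff_last (fun a => diff_last (fun b => pd a (pd b H) (slift z)) (w j)) (w i).
Proof.
move=> dH dpH.
have -> : pd j (fun z => H (slift z)) = fun z => pd (w j) H (slift z) - pd ord_max H (slift z).
  by apply: funext => z'; exact: pd_comp_simplex_lift.
rewrite (@pd_comp_simplex_lift (fun y => pd (w j) H y - pd ord_max H y)) => [|y].
  by congr (_ - _); rewrite pdB.
exact: differentiableB.
Qed.

End SimplexLift.


Theorem proposition5p3 (R : realType) (d : nat) (hd : (2 <= d)%N) (m : R)
    (f : 'rV[R]_d -> R) (hf : smooth f) (x : 'rV[R]_(d.-1))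
    (hx0 : forall i, 0 <= x 0 i) (hx1 : \sum_(j < d.-1) x 0 j <= 1) :
  let theta := m / 4 * (d.-1)%:R in
  let g := fun z : 'rV[R]_(d.-1) => f (simplex_lift z) in
  L_BEP m f (simplex_lift x) = L_WF theta g x.
Proof.
case: d hd f hf x hx0 hx1 => [|[|n]] // _ f hf x _ _ theta g.
have [df C1f] := hf 2.
have dpf i : forall y, differentiable (pd i f) y by case: (C1f i).
set y := simplex_lift x; pose w := widen_ord (leqnSn n.+1).
pose S a b := pd a (pd b f) y.
have pdg i : pd i g x = diff_last (fun a => pd a f y) (w i).
  exact: pd_comp_simplex_lift.
have pdpdg i j : pd i (pd j g) x = diff_last (fun a => diff_last (S a) (w j)) (w i).
  exact: pd_pd_comp_simplex_lift.
have pdiff2 a b : pdiff a b (pdiff a b f) y = (S a a - S a b) - (S b a - S b b).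
  by rewrite /pdiff !pdB.
have x_y i : x 0 i = y 0 (w i) by rewrite simplex_lift_widen.
have Ssym a b : S a b = S b a by exact: pd_comm.
rewrite /L_BEP /L_WF /=.
under eq_bigr do under eq_bigr do rewrite pdiff2.
rewrite (bep_diffusion_sum (sum_simplex_lift x) _ Ssym) (bep_drift_sum (sum_simplex_lift x)).
under [X in _ = X - _ + _]eq_bigr => i _ do rewrite (pdpdg i i) x_y.
under [X in _ = _ - X + _]eq_bigr => i _ do
  under eq_bigr => j _ do rewrite (pdpdg i j) x_y x_y.
under [X in _ = _ + _ * X]eq_bigr => i _ do rewrite pdg x_y.
rewrite (wf_diffusion_sum (sum_simplex_lift x) _ Ssym) (wf_drift_sum (sum_simplex_lift x)).
rewrite /theta /=.
by field; rewrite addrC natr1 pnatr_eq0.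
Qed.
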